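(* Let $(\mathbb X,S)$ be a minimal subshift over a finite alphabet $\mathcal A$ satisfying the Boshernitzan condition, and let $m\in\mathbb N$. Then each $S^m$-minimal component $\mathbb X_j$ of $\mathbb X$, viewed via the conjugacy $x\mapsto (x_{[km,(k+1)m-1]})_{k\in\mathbb Z}$ as a subshift (with the left shift, corresponding to $S^m$) over the alphabet $\mathcal L_m(\mathbb X)$, satisfies the Boshernitzan condition.
   Context: $\mathcal L_m(\mathbb X)$ is the set of words of length $m$ occurring in elements of $\mathbb X$, and $x_{[j,k]}=x_j\cdots x_k$. An $S^m$-minimal component is a nonempty closed $S^m$-invariant subset minimal with these properties. Boshernitzan condition for a minimal subshift $\mathbb Y$: there is a shift-invariant probability measure $\nu$ with $\limsup_{n}n\min\{\nu[u]:u\in\mathcal L_n(\mathbb Y)\}>0$, where $[u]$ is the cylinder set of $u$ at position $0$. *)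

From HB Require Import structures.
From mathcomp Require Import all_boot all_order all_algebra.
From mathcomp Require Import all_classical all_reals all_analysis.
Set Implicit Arguments. Unset Strict Implicit. Unset Printing Implicit Defensive.
Import Order.TTheory GRing.Theory Num.Theory.
Local Open Scope classical_set_scope.
Local Open Scope ring_scope.

Definition sshift {A : Type} (x : int -> A) : int -> A := fun k => x (k + 1).

Definition window {A : finType} (n : nat) (x : int -> A) (k : int) : n.-tuple A :=
  [tuple x (k + (val i)%:Z) | i < n].

(* Closedness in the product topology (A discrete): a point all of whose
   central windows x_{[-n,n]} agree with some point of Z lies in Z. *)
Definition seq_closed {A : Type} (Z : set (int -> A)) : Prop :=
  forall x : int -> A,
    (forall n : nat, exists y, Z y /\
        forall i : int, - (n%:Z) <= i <= n%:Z -> x i = y i) -> Z x.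

Definition closed_invariant {A : Type} (f : (int -> A) -> (int -> A))
  (Z : set (int -> A)) : Prop :=
  Z !=set0 /\ seq_closed Z /\ f @` Z = Z.

Definition subshift {A : Type} (X : set (int -> A)) : Prop :=
  closed_invariant sshift X.

Definition minimal_component {A : Type} (f : (int -> A) -> (int -> A))
  (X Z : set (int -> A)) : Prop :=
  Z `<=` X /\ closed_invariant f Z /\
  forall W, W `<=` Z -> closed_invariant f W -> W = Z.

Definition minimal_subshift {A : Type} (X : set (int -> A)) : Prop :=
  subshift X /\ forall W, W `<=` X -> subshift W -> W = X.

Definition language {A : finType} (Y : set (int -> A)) (n : nat)
  : set (n.-tuple A) :=
  [set u | exists2 y, Y y & exists k : int, window n y k = u].

(* Type of sequences, pointed by a letter a (needed for the measurable space). *)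
Definition pseq (A : finType) (a : A) := int -> A.
HB.instance Definition _ (A : finType) (a : A) := gen_eqMixin (pseq a).
HB.instance Definition _ (A : finType) (a : A) := gen_choiceMixin (pseq a).
HB.instance Definition _ (A : finType) (a : A) :=
  isPointed.Build (pseq a) (fun _ => a).

(* Cylinder sets (at every position); they generate the Borel
   sigma-algebra of the product topology. *)
Definition cylinders (A : finType) (a : A) : set (set (pseq a)) :=
  [set C | exists (n : nat) (u : n.-tuple A) (k : int),
           C = [set x : pseq a | window n x k = u]].

Definition seqspace (A : finType) (a : A) := g_sigma_algebraType (@cylinders A a).

Definition cyl (A : finType) (a : A) (n : nat) (u : n.-tuple A)
  : set (seqspace a) := [set x | window n x 0 = u].

Definition boshernitzan (R : realType) (A : finType) (Y : set (int -> A)) : Prop :=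
  exists (a : A) (nu : probability (seqspace a) R),
    nu Y = 1%E /\
    (forall B : set (seqspace a), measurable B ->
        nu (@sshift A @^-1` B) = nu B) /\
    (0 < limn_esup (fun n : nat =>
        (n%:R)%:E * ereal_inf [set nu (@cyl A a n u) | u in @language A Y n]))%E.

Definition mblock {A : finType} (m : nat) (x : int -> A) : int -> m.-tuple A :=
  fun k => window m x (k * m%:Z).

(* The translates S^k X_j (0 <= k < m) cover X, and by S^m-minimality two of
   them are equal or disjoint; hence X_j is clopen in X, and by compactness
   there is a radius L such that every point of X agreeing with a point of X_j
   on [-L, L] lies in X_j.
   The measure on the block system is the image of nu conditioned on X_j, which
   is shift-invariant because X_j is S^m-invariant.  If the n-block word w is
   read off y in X_j at position 0, every point of X agreeing with y on
   [-L, nm + L] lies in X_j and reads w, so the conditional mass of [w] is at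
   least the minimal nu-mass of the words of X of length nm + 2L + 1.  Thus the
   Boshernitzan bound for X transfers, up to a factor 2m. *)

From HB Require Import structures.
From Stdlib Require Import ChoiceFacts.
From mathcomp Require Import all_boot all_order all_algebra.
From mathcomp Require Import all_classical all_reals all_analysis.
From mathcomp Require Import zify lra.
Set Implicit Arguments.
Unset Strict Implicit.
Unset Printing Implicit Defensive.
Import Order.TTheory GRing.Theory Num.Theory.
Local Open Scope classical_set_scope.
Local Open Scope ring_scope.

Definition shift {B : Type} (t : int) (x : int -> B) : int -> B :=
  fun k => x (k + t).

Definition agree {B : Type} (n : nat) (x y : int -> B) : Prop :=
  forall i : int, - n%:Z <= i <= n%:Z -> x i = y i.

Definition shift_invariant {B : Type} (t : int) (Z : set (int -> B)) : Prop :=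
  forall x, Z (shift t x) <-> Z x.

Definition infinitely_often (P : nat -> Prop) : Prop :=
  forall K : nat, exists2 L : nat, (K <= L)%N & P L.

Section sequences.
Variable B : Type.
Implicit Types (x y z : int -> B) (Z : set (int -> B)).

Lemma shift0 x : shift 0 x = x.
Proof. by apply/funext => k; rewrite /shift addr0. Qed.

Lemma shiftD s t x : shift s (shift t x) = shift (s + t) x.
Proof. by apply/funext => k; rewrite /shift addrA. Qed.

Lemma shiftNK t : cancel (@shift B t) (shift (- t)).
Proof. by move=> x; rewrite shiftD addNr shift0. Qed.

Lemma shiftKN t : cancel (@shift B (- t)) (shift t).
Proof. by move=> x; rewrite shiftD addrN shift0. Qed.

Lemma iter_sshift n : iter n (@sshift B) = shift n%:Z.
Proof.
apply/funext => x; elim: n => [|n IHn] /=; first by rewrite shift0.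
by rewrite IHn /sshift; apply/funext => k; rewrite /shift -addrA -intS.
Qed.

Lemma agree_le n N x y : (n <= N)%N -> agree N x y -> agree n x y.
Proof. by move=> nN xy i ?; apply: xy; lia. Qed.

Lemma agree_sym n x y : agree n x y -> agree n y x.
Proof. by move=> xy i /xy. Qed.

Lemma agree_trans n x y z :
  agree n x y -> agree n y z -> agree n x z.
Proof. by move=> xy yz i ni; rewrite xy ?yz. Qed.

Lemma agree_diagonal (zs : nat -> int -> B) :
  (forall n, agree n (zs n) (zs n.+1)) ->
  forall n, agree n (zs n) (fun i => zs `|i|%N i).
Proof.
move=> zsS; have zs_le n d : agree n (zs n) (zs (n + d)%N).
  elim: d => [|d IHd]; first by rewrite addn0.
  by apply: agree_trans IHd _; rewrite addnS; apply: agree_le (zsS _); lia.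
move=> n i ni; have /subnKC <- : (`|i| <= n)%N by lia.
by symmetry; apply: zs_le; lia.
Qed.

Lemma shift_invariantP t Z : shift t @` Z = Z <-> shift_invariant t Z.
Proof.
split=> [tZ x | tZ].
  split=> [|Zx]; last by rewrite -tZ; exists x.
  by rewrite -{1}tZ => -[y Zy /(can_inj (@shiftNK t)) <-].
apply/seteqP; split=> [_ [x Zx <-]|x Zx]; first exact/tZ.
by exists (shift (- t) x); [apply/tZ; rewrite shiftKN | rewrite shiftKN].
Qed.

Lemma shift_invariantN t Z : shift_invariant t Z -> shift_invariant (- t) Z.
Proof. by move=> tZ x; rewrite -[in X in _ <-> X](shiftKN t x) tZ. Qed.

Lemma shift_invariantD s t Z :
  shift_invariant s Z -> shift_invariant t Z -> shift_invariant (s + t) Z.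
Proof. by move=> sZ tZ x; rewrite -shiftD sZ tZ. Qed.

Lemma shift_invariantMl k t Z :
  shift_invariant t Z -> shift_invariant (k * t) Z.
Proof.
move=> tZ; have nZ (n : nat) : shift_invariant (n%:Z * t) Z.
  elim: n => [x|n IHn]; first by rewrite mul0r shift0.
  by rewrite intS mulrDl mul1r addrC; exact: shift_invariantD.
by case: k => n; rewrite ?NegzE ?mulNr; [|apply: shift_invariantN]; exact: nZ.
Qed.

End sequences.

Section closed_sets.
Variable B : Type.
Implicit Types (x : int -> B) (Z : set (int -> B)).

Lemma seq_closed_set0 : seq_closed (@set0 (int -> B)).
Proof. by move=> x /(_ 0%N) [y [[]]]. Qed.

Lemma seq_closed_preimage_shift t Z :
  seq_closed Z -> seq_closed (shift t @^-1` Z).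
Proof.
move=> cZ x xZ; apply: cZ => n; have [y [Zy xy]] := xZ (n + `|t|)%N.
by exists (shift t y); split=> // i ?; apply: xy; lia.
Qed.

Lemma seq_closedI Z1 Z2 :
  seq_closed Z1 -> seq_closed Z2 -> seq_closed (Z1 `&` Z2).
Proof.
move=> cZ1 cZ2 x xZ; split; [apply: cZ1|apply: cZ2] => n;
  by have [y [[? ?] ?]] := xZ n; exists y.
Qed.

Lemma seq_closed_bigcup (I : finType) (F : I -> set (int -> B)) :
  (forall i, seq_closed (F i)) -> seq_closed (\bigcup_i F i).
Proof.
move=> cF x xF; apply: contrapT => nFx.
have /choice [n nP] : forall i, exists n, forall y, F i y -> ~ agree n x y.
  move=> i; apply: contrapT => ni; apply: nFx; exists i => //; apply: cF => k.
  apply: contrapT => nk; apply: ni; exists k => y Fy xy; apply: nk.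
  by exists y.
have [y [[i _ Fiy] xy]] := xF (\max_i n i)%N.
by apply: (nP i y Fiy); apply: agree_le xy; exact: leq_bigmax.
Qed.

End closed_sets.

Lemma infinitely_often_pigeonhole (F : finType) (P : nat -> Prop) (e : nat -> F) :
  infinitely_often P -> exists f, infinitely_often (fun L => P L /\ e L = f).
Proof.
move=> iP; apply: contrapT => nf.
have /choice [K KP] : forall f, exists K, forall L, (K <= L)%N -> P L -> e L <> f.
  move=> f; apply: contrapT => nK; apply: nf; exists f => K.
  apply: contrapT => nL; apply: nK; exists K => L KL PL eL; apply: nL.
  by exists L.
have [L KL PL] := iP (\max_f K f)%N.
by apply: (KP (e L) L _ PL erefl); apply: leq_trans KL; exact: leq_bigmax.
Qed.

Section compactness.
Variable A : finType.

Lemma cluster_step (x : nat -> int -> A) n z :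
  infinitely_often (fun L => agree n (x L) z) ->
  exists z', agree n z z' /\ infinitely_often (fun L => agree n.+1 (x L) z').
Proof.
pose e L := (x L (- n.+1%:Z), x L n.+1%:Z).
move=> /(infinitely_often_pigeonhole e) [[l r] ilr].
exists (fun i => if i == - n.+1%:Z then l else if i == n.+1%:Z then r else z i).
split=> [i ni|K]; first by rewrite !ifF //; apply/eqP; lia.
have [L KL [xz [<- <-]]] := ilr K; exists L => // i ni.
by do 2![case: eqP => [->|?] //]; apply: xz; lia.
Qed.

Lemma cluster_point (x : nat -> int -> A) :
  exists z, forall n, infinitely_often (fun L => agree n (x L) z).
Proof.
pose Q n z := infinitely_often (fun L => agree n (x L) z).
have [z0 Qz0] : exists z, Q 0%N z.
  have [a ia] := infinitely_often_pigeonhole (P := fun=> True) (fun L => x L 0)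
    (fun K => ex_intro2 _ _ K (leqnn K) I).
  exists (fun _ => a) => K; have [L KL [_ xa]] := ia K.
  by exists L => // i i0; have -> : i = 0 by lia.
pose T := {p : nat * (int -> A) | Q p.1 p.2}.
pose next (p q : T) :=
  (sval q).1 = (sval p).1.+1 /\ agree (sval p).1 (sval p).2 (sval q).2.
have [|f [f0 fS]] := functional_choice_imp_functional_dependent_choice
  (constructive_indefinite_descr_fun_choice constructive_indefinite_description)
  next _ (exist _ (0%N, z0) Qz0).
  move=> [[n z] /= Qz]; have [z' [zz' Qz']] := cluster_step Qz.
  by exists (exist _ (n.+1, z') Qz').
have fn n : (sval (f n)).1 = n.
  by elim: n => [|n IHn]; [rewrite f0 | rewrite (fS n).1 IHn].
pose zs n := (sval (f n)).2.
have zsS n : agree n (zs n) (zs n.+1) by rewrite -{1}(fn n); exact: (fS n).2.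
have Qzs n : Q n (zs n) by rewrite -{1}(fn n); exact: (svalP (f n)).
exists (fun i => zs `|i|%N i) => n K; have [L KL xz] := Qzs n K.
by exists L => //; apply: agree_trans xz _; exact: agree_diagonal.
Qed.

Lemma seq_closed_meet (K Z : set (int -> A)) : seq_closed K -> seq_closed Z ->
  (forall L : nat, exists x y, [/\ K x, Z y & agree L x y]) -> K `&` Z !=set0.
Proof.
move=> cK cZ /choice [x Kx]; have /choice [y xy] := Kx.
have [z Lz] := cluster_point x; exists z; split.
  apply: cK => n; have [L _ xz] := Lz n 0%N; exists (x L).
  by have [? _ _] := xy L; split=> //; exact: agree_sym.
apply: cZ => n; have [L nL xz] := Lz n n; exists (y L).
have [_ ? xyL] := xy L; split=> //; apply: agree_sym.
by apply: agree_trans xz; apply: agree_sym; apply: agree_le xyL.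
Qed.

End compactness.

Lemma minimal_subshift_invariant (B : Type) (X : set (int -> B)) t :
  minimal_subshift X -> shift_invariant t X.
Proof.
move=> [[_ [_ /shift_invariantP X1]] _].
by rewrite -[t]mulr1; exact: shift_invariantMl.
Qed.

Section minimal_component.
Variables (A : finType) (X Xj : set (int -> A)) (m : nat).
Hypotheses (mX : minimal_subshift X) (mXj : minimal_component (iter m sshift) X Xj).

Lemma minimal_component_invariant k : shift_invariant (k * m%:Z) Xj.
Proof.
have [_ [[_ [_]]]] := mXj; rewrite iter_sshift => /shift_invariantP Xjm _.
exact: shift_invariantMl.
Qed.

Lemma minimal_component_shift_invariant i :
  Xj `&` shift i @^-1` Xj !=set0 -> shift_invariant i Xj.
Proof.
have [_ [[_ [cXj _]] minXj]] := mXj.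
have Xjm x : Xj (shift m%:Z x) <-> Xj x.
  by have := minimal_component_invariant 1 x; rewrite mul1r.
have sub j : Xj `&` shift j @^-1` Xj !=set0 -> Xj `<=` shift j @^-1` Xj.
  move=> Xjj; suff XjE : Xj `&` shift j @^-1` Xj = Xj by rewrite -{1}XjE => x [].
  apply: minXj; first by move=> x [].
  split=> //; split; first by apply: seq_closedI => //; exact: seq_closed_preimage_shift.
  rewrite iter_sshift; apply/shift_invariantP => x /=.
  by rewrite shiftD addrC -shiftD !Xjm.
move=> Xji x; split; last exact: sub.
have /sub Xjn : Xj `&` shift (- i) @^-1` Xj !=set0.
  by have [z [Xjz Xjiz]] := Xji; exists (shift i z); rewrite /preimage/= shiftNK.
by move/Xjn; rewrite /preimage/= shiftNK.
Qed.

Lemma minimal_component_translate_cover : (0 < m)%N ->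
  X `<=` \bigcup_(k : 'I_m) shift k%:Z @^-1` Xj.
Proof.
have [XjX [[[x0 Xjx0] [cXj _]] _]] := mXj; move=> m_gt0.
pose U := \bigcup_(k : 'I_m) shift k%:Z @^-1` Xj.
have UE x : U x <-> exists k : int, Xj (shift k x).
  split=> [[k _ Xjk]|[k Xjk]]; first by exists k.
  have mk : (`|(k %% m)%Z|%N < m)%N by lia.
  exists (Ordinal mk) => //=; rewrite /preimage/= (_ : _%:Z = (k %% m)%Z); last by lia.
  by rewrite -(minimal_component_invariant (k %/ m)%Z) shiftD -divz_eq.
suff <- : U = X by [].
apply: mX.2; first by move=> x [k _ /XjX/(minimal_subshift_invariant k%:Z mX)].
split; first by exists x0; apply/UE; exists 0; rewrite shift0.
split; first by apply: seq_closed_bigcup => k; exact: seq_closed_preimage_shift.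
apply/(shift_invariantP 1) => x; rewrite !UE.
split=> [[k]|[k]]; rewrite ?shiftD; first by exists (k + 1).
by exists (k - 1); rewrite shiftD subrK.
Qed.

Lemma seq_closed_minimal_component_complement : (0 < m)%N ->
  seq_closed (X `\` Xj).
Proof.
move=> m_gt0; have [XjX [[_ [cXj _]] _]] := mXj.
suff -> : X `\` Xj = \bigcup_(k : 'I_m) (shift k%:Z @^-1` Xj `\` Xj).
  apply: seq_closed_bigcup => k.
  have [/minimal_component_shift_invariant Xjk|disj] :=
    pselect (Xj `&` shift k%:Z @^-1` Xj !=set0).
    rewrite (_ : _ `\` _ = set0); first exact: seq_closed_set0.
    by apply/seteqP; split=> x // [/Xjk].
  rewrite (_ : _ `\` _ = shift k%:Z @^-1` Xj); first exact: seq_closed_preimage_shift.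
  by apply/seteqP; split=> [x []//|x Xjk]; split=> // Xjx; apply: disj; exists x.
apply/seteqP; split=> [x [Xx nXjx]|x [k _ [Xjk nXjx]]].
  by have [k _ Xjk] := minimal_component_translate_cover m_gt0 Xx; exists k.
by split=> //; apply/(minimal_subshift_invariant k%:Z mX); exact: XjX.
Qed.

Lemma minimal_component_clopen : (0 < m)%N ->
  exists L : nat, forall x y, X x -> Xj y -> agree L x y -> Xj x.
Proof.
move=> m_gt0; have [_ [[_ [cXj _]] _]] := mXj.
apply: contrapT => noL.
have [z [[_ nXjz] Xjz]] : (X `\` Xj) `&` Xj !=set0.
  apply: seq_closed_meet (seq_closed_minimal_component_complement m_gt0) cXj _ => L.
  apply: contrapT => noxy; apply: noL; exists L => x y Xx Xjy xy.
  by apply: contrapT => nXjx; apply: noxy; exists x, y.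
exact: nXjz.
Qed.

End minimal_component.

Section windows.
Variable A : finType.
Implicit Types (x y : int -> A).

Lemma window_shift n x t k : window n (shift t x) k = window n x (k + t).
Proof. by apply: eq_from_tnth => i; rewrite !tnth_mktuple /shift addrAC. Qed.

Lemma window_eqP n x y k k' : window n x k = window n y k' <->
  forall i : int, k <= i < k + n%:Z -> x i = y (i - k + k').
Proof.
split=> [xy i ki|xy]; last first.
  apply: eq_from_tnth => -[j jn]; rewrite !tnth_mktuple /= xy; last by lia.
  by congr y; lia.
have jn : (`|i - k| < n)%N by lia.
have := congr1 (fun t => tnth t (Ordinal jn)) xy; rewrite !tnth_mktuple /=.
have -> : k + `|i - k|%N%:Z = i by lia.
by have -> : k' + `|i - k|%N%:Z = i - k + k' by lia.
Qed.

Lemma mblock_shift m x k : mblock m (shift (k * m%:Z) x) = shift k (mblock m x).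
Proof. by apply/funext => j; rewrite /mblock window_shift -mulrDl. Qed.

End windows.

Section measurability.
Variables (A : finType) (a : A).

Lemma measurable_window_eq n (u : n.-tuple A) k :
  measurable [set x : seqspace a | window n x k = u].
Proof. by apply: sub_sigma_algebra; exists n, u, k. Qed.

Lemma measurable_fun_window (B : finType) (b : B) (f : seqspace a -> seqspace b) :
  (forall n (u : n.-tuple B) k,
     measurable (f @^-1` [set x : seqspace b | window n x k = u])) ->
  measurable_fun setT f.
Proof.
move=> fw; apply: (measurability (@cylinders B b : set (set (seqspace b)))) => //.
by move=> _ [_ [n [u [k ->]]] <-]; rewrite setTI; exact: fw.
Qed.

Lemma measurable_shift t : measurable_fun setT (shift t : seqspace a -> seqspace a).
Proof.
apply: measurable_fun_window => n u k.
rewrite (_ : _ @^-1` _ = [set x : seqspace a | window n x (k + t) = u]).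
  exact: measurable_window_eq.
by apply/seteqP; split=> x /=; rewrite window_shift.
Qed.

Lemma seq_closed_measurable (Z : set (seqspace a)) : seq_closed Z -> measurable Z.
Proof.
move=> cZ; pose W n := [set window n.*2.+1 y (- n%:Z) | y in Z].
rewrite (_ : Z = \bigcap_(n : nat) \bigcup_(u in W n)
                   [set x : seqspace a | window n.*2.+1 x (- n%:Z) = u]).
  apply: bigcapT_measurable => n; apply: fin_bigcup_measurable => // u _.
  exact: measurable_window_eq.
apply/seteqP; split=> [x Zx n _|x xZ].
  by exists (window n.*2.+1 x (- n%:Z)) => //; exists x.
apply: cZ => n; have [_ [y Zy <-] /window_eqP yx] := xZ n I.
by exists y; split=> // i ni; rewrite yx ?subrK //; lia.
Qed.

Lemma measurable_mblock m (a' : m.-tuple A) :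
  measurable_fun setT (mblock m : seqspace a -> seqspace a').
Proof.
apply: measurable_fun_window => n w k.
rewrite (_ : _ @^-1` _ = \bigcap_(j : 'I_n)
    [set x : seqspace a | window m x ((k + j%:Z) * m%:Z) = tnth w j]).
  by apply: fin_bigcap_measurable => // j _; exact: measurable_window_eq.
apply/seteqP; split=> [x /= xw j _|x /= xw]; first by rewrite -xw tnth_mktuple.
by apply: eq_from_tnth => j; rewrite tnth_mktuple; exact: xw.
Qed.

Lemma shift_invariant_measure (R : realType) (nu : {measure set seqspace a -> \bar R}) :
  (forall B : set (seqspace a), measurable B -> nu (@sshift A @^-1` B) = nu B) ->
  forall (n : nat) (B : set (seqspace a)), measurable B ->
  nu (shift n%:Z @^-1` B) = nu B.
Proof.
move=> nuS; elim=> [|n IHn] B mB.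
  by rewrite /preimage; under eq_fun do rewrite shift0.
have -> : shift n.+1%:Z @^-1` B = @sshift A @^-1` (shift n%:Z @^-1` B).
  by rewrite /preimage /= intS addrC; under eq_fun do rewrite -shiftD.
by rewrite nuS ?IHn //; rewrite -[X in measurable X]setTI; exact: measurable_shift.
Qed.

End measurability.

Section limsup.
Variable R : realType.
Local Open Scope ereal_scope.
Implicit Types u I J : (\bar R)^nat.

Lemma limn_esupE u : limn_esup u = ereal_inf (range (esups u)).
Proof. by rewrite limn_esup_lim; apply/cvg_lim => //; exact: cvg_esups_inf. Qed.

Lemma limn_esup_gt0P u : 0 < limn_esup u <->
  exists2 eps : R, (0 < eps)%R & infinitely_often (fun n => eps%:E <= u n).
Proof.
split=> [u_gt0|[eps eps_gt0 ueps]]; last first.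
  rewrite limn_esupE; apply: (@lt_le_trans _ _ eps%:E); first by rewrite lte_fin.
  apply: le_ereal_inf_tmp => _ [K _ <-]; have [n Kn epsn] := ueps K.
  by apply: (le_trans epsn); apply: ereal_sup_ubound; exists n.
have [eps eps_gt0 epsu] : exists2 eps : R, (0 < eps)%R & eps%:E < limn_esup u.
  move: u_gt0; case: (limn_esup u) => [r|_|//]; last by exists 1%R; rewrite ?ltry.
  by rewrite lte_fin => r_gt0; exists (r / 2)%R; rewrite ?lte_fin; lra.
exists eps => // K; have : eps%:E < esups u K.
  by apply: (lt_le_trans epsu); rewrite limn_esupE; apply: ereal_inf_lbound; exists K.
by move=> /ereal_sup_gt [_ [n Kn <-] /ltW]; exists n.
Qed.

Lemma limn_esup_gt0_subsample I J (m c : nat) : (0 < m)%N ->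
  (forall N, 0 <= I N) -> {homo I : N N' / (N <= N')%N >-> N' <= N} ->
  (forall n : nat, n%:R%:E * I (n * m + c)%N <= J n) ->
  0 < limn_esup (fun N => N%:R%:E * I N) -> 0 < limn_esup J.
Proof.
move=> m_gt0 I_ge0 I_anti IJ /limn_esup_gt0P [eps eps_gt0 Ieps].
have m_gt0' : (0 < m%:R :> R)%R by rewrite ltr0n.
apply/limn_esup_gt0P; exists (eps / (2 * m%:R))%R.
  by apply: divr_gt0 => //; rewrite mulr_gt0.
(* For [N >= 2 (c + m)] and [n := (N - c) / m] we get [N <= 2 m n], hence
   [n I (n m + c) >= n I N >= N I N / (2 m)]. *)
move=> K; have [N KN epsN] := Ieps (2 * m * K.+1 + 2 * (c + m))%N.
pose n := ((N - c) %/ m)%N.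
have nmN : (n * m + c <= N)%N by have := leq_divM (N - c) m; lia.
have N_le : (N <= 2 * m * n)%N by have := ltn_ceil (N - c) m_gt0; nia.
exists n; first by nia.
apply: le_trans (IJ n); apply: (@le_trans _ _ (n%:R%:E * I N)); last first.
  by apply: lee_wpmul2l; [rewrite lee_fin ler0n | exact: I_anti].
move: epsN (I_ge0 N); case: (I N) => [r| |] //; last first.
  by move=> _ _; rewrite gt0_muley ?leey // lte_fin ltr0n; lia.
rewrite -!EFinM !lee_fin => epsN r_ge0.
have : (N%:R * r <= (2 * m * n)%:R * r)%R by apply: ler_wpM2r; rewrite ?ler_nat.
by rewrite ler_pdivrMr ?mulr_gt0 // !natrM; nra.
Qed.

End limsup.

Section conditional_pushforward.
Context d d' (T1 : measurableType d) (T2 : measurableType d') (R : realType).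
Variables (nu : {measure set T1 -> \bar R}) (D : set T1) (mD : measurable D).
Variables (f : T1 -> T2) (mf : measurable_fun setT f) (P0 : probability T2 R).

(* P0 is the junk value of [mnormalize] when [nu D] is 0 or infinite. *)
Definition conditional_pushforward : probability T2 R.
Proof.
by unshelve refine (mnormalize (pushforward (mrestr nu mD) f) P0 : probability _ _).
Defined.

Lemma conditional_pushforwardE U : (0 < nu D < +oo)%E ->
  conditional_pushforward U = (nu (f @^-1` U `&` D) * (fine (nu D))^-1%:E)%E.
Proof.
move=> /andP[nuD_gt0 nuD_fin].
have evidence : nu (f @^-1` [set: T2] `&` D) = nu D by rewrite preimage_setT setTI.
(* The total mass [nu D] occurs three times, under different instance paths. *)
rewrite /= /mnormalize; set ev0 := (X in X == 0); set evoo := (X in X == +oo%E).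
set ev := (X in fine X).
have [-> -> ->] : [/\ ev0 = nu D, evoo = nu D & ev = nu D] by split; exact: evidence.
by rewrite (gt_eqF nuD_gt0) (lt_eqF nuD_fin).
Qed.

End conditional_pushforward.

Lemma probability_setI_eq1 d (T : measurableType d) (R : realType)
    (P : probability T R) (D E : set T) :
  measurable D -> measurable E -> P D = 1%E -> P (E `&` D) = P E.
Proof.
move=> mD mE PD1; rewrite (measureDI P mE mD) (@subset_measure0 _ _ _ P (E `\` D) (~` D)).
- by rewrite add0e.
- exact: measurableD.
- exact: measurableC.
- by move=> x [].
- by have := probability_setC P mD; rewrite PD1 subee.
Qed.

Definition min_cylinder_mass (R : realType) (A : finType) (a : A)
    (nu : set (seqspace a) -> \bar R) (Y : set (int -> A)) (n : nat) : \bar R :=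
  ereal_inf [set nu (cyl u) | u in @language _ Y n].

Section min_cylinder_mass.
Variables (R : realType) (A : finType) (a : A) (nu : {measure set seqspace a -> \bar R}).
Variable Y : set (int -> A).
Local Notation mass := (min_cylinder_mass nu Y).
Local Open Scope ereal_scope.

Lemma min_cylinder_mass_ge0 n : 0 <= mass n.
Proof.
by apply: le_ereal_inf_tmp => _ [u _ <-]; exact: measure_ge0.
Qed.

Lemma min_cylinder_mass_le n y k : Y y -> mass n <= nu (cyl (a := a) (window n y k)).
Proof.
move=> Yy; apply: ereal_inf_lbound.
by exists (window n y k) => //; exists y => //; exists k.
Qed.

Lemma min_cylinder_mass_antitone : {homo mass : n n' / (n <= n')%N >-> n' <= n}.
Proof.
move=> n n' nn'; apply: le_ereal_inf_tmp => _ [u [y Yy [k <-]] <-].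
apply: le_trans (min_cylinder_mass_le n' k Yy) _.
apply: le_measure; rewrite ?inE; try exact: measurable_window_eq.
by move=> x /window_eqP xy; apply/window_eqP => i ki; apply: xy; lia.
Qed.

Lemma min_cylinder_mass_gt0 :
  0 < limn_esup (fun n => n%:R%:E * mass n) -> forall n, 0 < mass n.
Proof.
move=> /limn_esup_gt0P [eps eps_gt0 epsm] n; have [N nN epsN] := epsm n.
apply: lt_le_trans (min_cylinder_mass_antitone nN).
rewrite lt0e min_cylinder_mass_ge0 andbT.
by apply: contraTneq epsN => ->; rewrite mule0 -ltNge lte_fin.
Qed.

End min_cylinder_mass.

Section block_measure.
Variables (R : realType) (A : finType) (a : A) (nu : probability (seqspace a) R).
Variables (X Xj : set (int -> A)) (m L : nat).
Hypotheses (nuX : nu X = 1%E)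
  (nu_inv : forall B : set (seqspace a), measurable B -> nu (@sshift A @^-1` B) = nu B)
  (nu_bosh : (0 < limn_esup (fun n => n%:R%:E * min_cylinder_mass nu X n))%E).
Hypotheses (cX : seq_closed X) (cXj : seq_closed Xj) (XjX : Xj `<=` X)
  (Xj0 : Xj !=set0) (Xj_inv : shift_invariant m%:Z Xj)
  (XjL : forall x y, X x -> Xj y -> agree L x y -> Xj x).

Local Notation mass := (min_cylinder_mass nu X).
Local Notation a' := (nseq_tuple m a).

Let mX : measurable (X : set (seqspace a)) := seq_closed_measurable cX.
Let mXj : measurable (Xj : set (seqspace a)) := seq_closed_measurable cXj.

Let measurable_block_preimage (U : set (seqspace a')) :
  measurable U -> measurable (mblock m @^-1` U `&` Xj : set (seqspace a)).
Proof.
move=> mU; apply: measurableI => //; rewrite -[X in measurable X]setTI.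
exact: (measurable_mblock (a' := a')).
Qed.

Let measurable_block_cylinder n (w : n.-tuple (m.-tuple A)) :
  measurable (mblock m @^-1` cyl (a := a') w `&` Xj : set (seqspace a)).
Proof. by apply: measurable_block_preimage; exact: measurable_window_eq. Qed.

Lemma cylinder_sub_block_cylinder y n : Xj y ->
  let N := (n * m + L.*2.+1)%N in
  X `&` [set x | window N x (- L%:Z) = window N y (- L%:Z)] `<=`
  mblock m @^-1` cyl (a := a') (window n (mblock m y) 0) `&` Xj.
Proof.
move=> Xjy N x [Xx /window_eqP xy].
have xyE i : - L%:Z <= i <= n%:Z * m%:Z + L%:Z -> x i = y i.
  by move=> ?; rewrite xy ?subrK //; lia.
split; last by apply: (XjL Xx Xjy) => i ?; apply: xyE; nia.
apply/window_eqP => j j_lt; rewrite /mblock; apply/window_eqP => i i_lt.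
by rewrite xyE; [congr y; lia | nia].
Qed.

Lemma min_cylinder_mass_le_block y n : Xj y ->
  (mass (n * m + L.*2.+1) <=
   nu (mblock m @^-1` cyl (a := a') (window n (mblock m y) 0) `&` Xj))%E.
Proof.
move=> Xjy; set N := (n * m + L.*2.+1)%N.
pose C := [set x : seqspace a | window N x (- L%:Z) = window N y (- L%:Z)].
have mC : measurable C by exact: measurable_window_eq.
move: (min_cylinder_mass_le nu N (- L%:Z) (XjX Xjy)) => /le_trans; apply.
have -> : cyl (a := a) (window N y (- L%:Z)) = shift L%:Z @^-1` C.
  by apply/seteqP; split=> x; rewrite /cyl /C /preimage /= window_shift addNr.
rewrite (shift_invariant_measure nu_inv) //.
apply: (@le_trans _ _ (nu (X `&` C))).
  by rewrite setIC (probability_setI_eq1 mX mC nuX).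
apply: le_measure; rewrite ?inE; [exact: measurableI|exact: measurable_block_cylinder|].
exact: cylinder_sub_block_cylinder.
Qed.

Lemma minimal_component_measure_gt0 : (0 < nu Xj)%E.
Proof.
have [y Xjy] := Xj0; apply: lt_le_trans (min_cylinder_mass_gt0 nu_bosh (L.*2.+1)) _.
rewrite -[X in mass X]/(0 * m + L.*2.+1)%N.
apply: le_trans (min_cylinder_mass_le_block 0 Xjy) _.
by apply: le_measure; rewrite ?inE //; exact: measurable_block_cylinder.
Qed.

Let nuXj_fin : nu Xj \is a fin_num.
Proof.
by rewrite ge0_fin_numE ?measure_ge0 // (le_lt_trans (probability_le1 nu mXj)) ?ltey.
Qed.

Definition block_measure : probability (seqspace a') R :=
  conditional_pushforward nu mXj (measurable_mblock (a' := a')) point.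

Lemma block_measureE U :
  block_measure U = (nu (mblock m @^-1` U `&` Xj) * (fine (nu Xj))^-1%:E)%E.
Proof.
apply: conditional_pushforwardE.
by rewrite minimal_component_measure_gt0 -ge0_fin_numE ?measure_ge0.
Qed.

Lemma block_measure_image : block_measure (mblock m @` Xj) = 1%E.
Proof.
rewrite block_measureE (_ : _ `&` _ = Xj); last first.
  by apply/seteqP; split=> [x []//|x Xjx]; split=> //; exists x.
rewrite -{1}(fineK nuXj_fin) -EFinM divff // fine_eq0 //.
by rewrite gt_eqF ?minimal_component_measure_gt0.
Qed.

Lemma block_measure_shift_invariant (B : set (seqspace a')) : measurable B ->
  block_measure (@sshift _ @^-1` B) = block_measure B.
Proof.
move=> mB; rewrite !block_measureE; congr (_ * _)%E.
have mblockS x : mblock m (shift m%:Z x) = sshift (mblock m x).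
  by have := mblock_shift m x 1; rewrite mul1r.
have -> : mblock m @^-1` (sshift @^-1` B) `&` Xj =
          shift m%:Z @^-1` (mblock m @^-1` B `&` Xj).
  by apply/seteqP; split=> x; rewrite /preimage /= mblockS Xj_inv.
by rewrite (shift_invariant_measure nu_inv) //; exact: measurable_block_preimage.
Qed.

Lemma min_cylinder_mass_le_block_measure n :
  (mass (n * m + L.*2.+1) <= min_cylinder_mass block_measure (mblock m @` Xj) n)%E.
Proof.
apply: le_ereal_inf_tmp => _ [_ [_ [x Xjx <-] [k <-]] <-].
have Xjy : Xj (shift (k * m%:Z) x) by apply/(shift_invariantMl k Xj_inv).
apply: le_trans (min_cylinder_mass_le_block n Xjy) _.
rewrite block_measureE mblock_shift window_shift add0r.
apply: lee_pemulr; first exact: measure_ge0.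
rewrite lee_fin invf_ge1 ?fine_gt0 ?minimal_component_measure_gt0 //=.
  by rewrite -lee_fin fineK // probability_le1.
by rewrite -ge0_fin_numE ?measure_ge0.
Qed.

Lemma boshernitzan_block_component : (0 < m)%N -> boshernitzan R (mblock m @` Xj).
Proof.
move=> m_gt0; exists a', block_measure; split; last split.
- exact: block_measure_image.
- exact: block_measure_shift_invariant.
apply: (limn_esup_gt0_subsample m_gt0 (c := L.*2.+1) _ _ _ nu_bosh).
- exact: min_cylinder_mass_ge0.
- exact: min_cylinder_mass_antitone.
move=> n; apply: lee_wpmul2l; first by rewrite lee_fin ler0n.
exact: min_cylinder_mass_le_block_measure.
Qed.

End block_measure.

Lemma boshernitzan_mblock0 (R : realType) (A : finType) (Xj : set (int -> A)) :
  Xj !=set0 -> boshernitzan R (mblock 0 @` Xj).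
Proof.
move=> [x0 Xjx0]; pose P : probability (seqspace ([tuple] : 0.-tuple A)) R := point.
have seq0_eq (y z : int -> 0.-tuple A) : y = z.
  by apply/funext => k; rewrite (tuple0 (y k)) (tuple0 (z k)).
have setT_eq (B : set (seqspace ([tuple] : 0.-tuple A))) (y : int -> 0.-tuple A) :
    B y -> B = setT.
  by move=> By; apply/seteqP; split=> // z _; rewrite (seq0_eq z y).
exists [tuple], P; split; last split.
- by rewrite (setT_eq (mblock 0 @` Xj) (mblock 0 x0)) ?probability_setT //; exists x0.
- move=> B mB; have -> // : @sshift _ @^-1` B = B.
  by apply/seteqP; split=> y; rewrite /preimage /= (seq0_eq (sshift y) y).
apply/limn_esup_gt0P; exists 1%R => // K; exists K.+1 => //.
apply: (@le_trans _ _ (K.+1%:R%:E * 1)%E); first by rewrite mule1 lee_fin ler1n.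
apply: lee_wpmul2l; first by rewrite lee_fin ler0n.
apply: le_ereal_inf_tmp => _ [u _ <-].
rewrite (setT_eq (cyl u) (fun=> [tuple])) ?probability_setT //.
by apply: eq_from_tnth => i; rewrite (tuple0 (tnth _ i)) (tuple0 (tnth u i)).
Qed.

Theorem lemma3p11 (R : realType) (A : finType) (X : set (int -> A)) (m : nat) :
  minimal_subshift X -> boshernitzan R X ->
  forall Xj : set (int -> A),
    minimal_component (iter m sshift) X Xj ->
    boshernitzan R (mblock m @` Xj).
Proof.
move=> mX [a [nu [nuX [nu_inv nu_bosh]]]] Xj mXj.
have [XjX [[Xj0 [cXj _]] _]] := mXj.
have [->|m_gt0] := posnP m; first exact: boshernitzan_mblock0.
have [L XjL] := minimal_component_clopen mX mXj m_gt0.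
have Xj_inv : shift_invariant m%:Z Xj.
  by have := minimal_component_invariant mXj 1; rewrite mul1r.
have [[_ [cX _]] _] := mX.
exact: boshernitzan_block_component nuX nu_inv nu_bosh cX cXj XjX Xj0 Xj_inv XjL m_gt0.
Qed.
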